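(* Let $H$ be a real Hilbert space, $A:H\to H$ bounded linear, $f\in H$ such that $Au=f$ is solvable, and $y$ the minimal-norm solution ($Ay=f$, $y\perp\mathcal N(A)$). Let $P:H\to H$ be bounded linear with $T:=PA$ selfadjoint, $T\ge0$, and $\mathcal N(T)=\mathcal N(A)$. Let $u_0\in H$ with $u_0-y\perp\mathcal N(A)$. For each $\delta>0$ let $f_\delta\in H$ satisfy $\|f_\delta-f\|\le\delta$, and let $u_\delta(t)$ be the solution of $$\dot u_\delta(t)=-P(Au_\delta(t)-f_\delta),\qquad u_\delta(0)=u_0.$$ If $t_\delta>0$ satisfy $\lim_{\delta\to0}t_\delta=\infty$ and $\lim_{\delta\to0}t_\delta\delta=0$, then $\lim_{\delta\to0}\|u_\delta(t_\delta)-y\|=0$. In particular this holds for $t_\delta=C\delta^{-\gamma}$ with constants $C>0$, $\gamma\in(0,1)$.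
   Context: $\mathcal N(A)=\{u\in H:Au=0\}$. *)

From Stdlib Require Import Reals Lra.
Open Scope R_scope.

Record HilbertSpace := {
  hcar :> Type;
  hzero : hcar;
  hadd : hcar -> hcar -> hcar;
  hopp : hcar -> hcar;
  hscal : R -> hcar -> hcar;
  hinner : hcar -> hcar -> R;
  haddA : forall x y z, hadd x (hadd y z) = hadd (hadd x y) z;
  haddC : forall x y, hadd x y = hadd y x;
  hadd0 : forall x, hadd x hzero = x;
  haddN : forall x, hadd x (hopp x) = hzero;
  hscal1 : forall x, hscal 1 x = x;
  hscalA : forall a b x, hscal a (hscal b x) = hscal (a * b) x;
  hscalDr : forall a x y, hscal a (hadd x y) = hadd (hscal a x) (hscal a y);
  hscalDl : forall a b x, hscal (a + b) x = hadd (hscal a x) (hscal b x);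
  hinnerC : forall x y, hinner x y = hinner y x;
  hinnerD : forall x y z, hinner (hadd x y) z = hinner x z + hinner y z;
  hinnerZ : forall a x y, hinner (hscal a x) y = a * hinner x y;
  hinner_ge0 : forall x, 0 <= hinner x x;
  hinner_eq0 : forall x, hinner x x = 0 -> x = hzero;
  hcomplete : forall s : nat -> hcar,
    (forall eps, 0 < eps -> exists N, forall m n, (N <= m)%nat -> (N <= n)%nat ->
       sqrt (hinner (hadd (s m) (hopp (s n))) (hadd (s m) (hopp (s n)))) < eps) ->
    exists l, forall eps, 0 < eps -> exists N, forall n, (N <= n)%nat ->
       sqrt (hinner (hadd (s n) (hopp l)) (hadd (s n) (hopp l))) < eps
}.

Arguments hzero {_}. Arguments hadd {_}. Arguments hopp {_}.
Arguments hscal {_}. Arguments hinner {_}.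

Definition hsub {H : HilbertSpace} (x y : H) : H := hadd x (hopp y).
Definition hnorm {H : HilbertSpace} (x : H) : R := sqrt (hinner x x).

Definition bounded_linear {H : HilbertSpace} (A : H -> H) : Prop :=
  (forall x y, A (hadd x y) = hadd (A x) (A y)) /\
  (forall a x, A (hscal a x) = hscal a (A x)) /\
  (exists M, forall x, hnorm (A x) <= M * hnorm x).

Definition selfadjoint {H : HilbertSpace} (T : H -> H) : Prop :=
  forall x y, hinner (T x) y = hinner x (T y).

Definition nonneg_op {H : HilbertSpace} (T : H -> H) : Prop :=
  forall x, 0 <= hinner (T x) x.

Definition nullsp {H : HilbertSpace} (A : H -> H) (u : H) : Prop := A u = hzero.

Definition orth {H : HilbertSpace} (x : H) (S : H -> Prop) : Prop :=
  forall z, S z -> hinner x z = 0.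

Definition has_deriv_on_nonneg {H : HilbertSpace} (u : R -> H) (t : R) (v : H) : Prop :=
  forall eps, 0 < eps -> exists d, 0 < d /\
    forall h, h <> 0 -> Rabs h < d -> 0 <= t + h ->
      hnorm (hsub (hscal (/ h) (hsub (u (t + h)) (u t))) v) <= eps.

Definition solves_ode {H : HilbertSpace} (P A : H -> H) (g u0 : H) (u : R -> H) : Prop :=
  u 0 = u0 /\
  forall t, 0 <= t -> has_deriv_on_nonneg u t (hopp (P (hsub (A (u t)) g))).

Definition lim0_to_infty (t : R -> R) : Prop :=
  forall M, exists d, 0 < d /\ forall delta, 0 < delta < d -> M < t delta.

Definition lim0_to_0 (g : R -> R) : Prop :=
  forall eps, 0 < eps -> exists d, 0 < d /\ forall delta, 0 < delta < d -> Rabs (g delta) < eps.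

From Stdlib Require Import Reals Lra Psatz ClassicalEpsilon.
Open Scope R_scope.

(* Write T := P A and w := u_delta - y.  Then w' = -T w + g with a
   perturbation g := P (f_delta - f) of norm at most M delta, and the whole
   argument is a set of energy estimates for this flow, valid up to time
   t with 2 M delta t <= 1:
   - Gronwall keeps w in a fixed ball of radius B (depending on w(0) only);
   - selfadjointness of T makes a |-> (w(c - a), w(c + a)) vary only
     through g, and nonnegativity makes |w|^2 almost decreasing;
   - testing the flow against T z gives, for every z,
       |w(t)|^2 <= |z| B / t + 2 M delta B t + |w(0) - T z| B + |z| M delta.
   Since w(0) = u0 - y is orthogonal to N(A) = N(T) and T is selfadjoint,
   w(0) lies in the closure of the range of T (projection theorem, using
   completeness), so the third term can be made arbitrarily small; the other
   terms vanish when t_delta -> oo and t_delta delta -> 0. *)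

Section InnerProduct.
Context {H : HilbertSpace}.
Implicit Types x y z : H.

Lemma inner_addr x y z : hinner x (hadd y z) = hinner x y + hinner x z.
Proof. rewrite hinnerC, hinnerD, (hinnerC _ y), (hinnerC _ z); reflexivity. Qed.

Lemma inner_scalr a x y : hinner x (hscal a y) = a * hinner x y.
Proof. rewrite hinnerC, hinnerZ, hinnerC; reflexivity. Qed.

Lemma inner_0l y : hinner (@hzero H) y = 0.
Proof.
  assert (E : hinner (hadd (@hzero H) hzero) y = hinner (@hzero H) y) by now rewrite hadd0.
  rewrite hinnerD in E; lra.
Qed.

Lemma inner_0r y : hinner y (@hzero H) = 0.
Proof. rewrite hinnerC; apply inner_0l. Qed.

Lemma inner_oppl x y : hinner (hopp x) y = - hinner x y.
Proof.
  assert (E : hinner (hadd x (hopp x)) y = 0) by (rewrite haddN; apply inner_0l).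
  rewrite hinnerD in E; lra.
Qed.

Lemma inner_oppr x y : hinner y (hopp x) = - hinner y x.
Proof. rewrite hinnerC, inner_oppl, hinnerC; reflexivity. Qed.

Lemma inner_subl x y z : hinner (hsub x y) z = hinner x z - hinner y z.
Proof. unfold hsub; rewrite hinnerD, inner_oppl; ring. Qed.

Lemma inner_subr x y z : hinner z (hsub x y) = hinner z x - hinner z y.
Proof. unfold hsub; rewrite inner_addr, inner_oppr; ring. Qed.

End InnerProduct.

#[global] Hint Rewrite @inner_subl @inner_subr @hinnerD @inner_addr @hinnerZ
  @inner_scalr @inner_oppl @inner_oppr @inner_0l @inner_0r : inner.
Ltac inner_simpl := autorewrite with inner.
Ltac inner_simpl_in h := autorewrite with inner in h.

Section Norm.
Context {H : HilbertSpace}.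
Implicit Types x y z : H.

(* Vectors are determined by their inner products; this turns every identity
   between vectors into an identity of reals. *)
Lemma vec_ext x y : (forall z, hinner x z = hinner y z) -> x = y.
Proof.
  intros E.
  assert (Z : hadd x (hopp y) = hzero).
  { apply hinner_eq0. rewrite hinnerD, inner_oppl, E. ring. }
  rewrite <- (hadd0 _ x), <- (haddN _ y), (haddC _ y (hopp y)), haddA, Z,
    haddC, hadd0. reflexivity.
Qed.

Lemma hnorm_ge0 x : 0 <= hnorm x.
Proof. apply sqrt_pos. Qed.

Lemma hnorm_sq x : hnorm x * hnorm x = hinner x x.
Proof. apply sqrt_sqrt, hinner_ge0. Qed.

Lemma hnorm_le_sq x r : 0 <= r -> hinner x x <= r * r -> hnorm x <= r.
Proof.
  intros Hr Hx. unfold hnorm. rewrite <- (sqrt_square r) by exact Hr.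
  now apply sqrt_le_1_alt.
Qed.

Lemma hnorm_lt_sq x r : 0 <= r -> hinner x x < r * r -> hnorm x < r.
Proof.
  intros Hr Hx. unfold hnorm. rewrite <- (sqrt_square r) by exact Hr.
  apply sqrt_lt_1_alt; split; [apply hinner_ge0 | exact Hx].
Qed.

Lemma quadratic_discriminant a b c : 0 <= a -> 0 <= c ->
  (forall s, 0 <= a - 2 * s * b + s * s * c) -> b * b <= a * c.
Proof.
  intros Ha Hc Q.
  destruct (Req_dec c 0) as [C0 | Cn].
  - subst c. destruct (Req_dec b 0) as [B0 | Bn]; [subst; lra |].
    specialize (Q ((a + 1) / (2 * b))).
    replace (a - 2 * ((a + 1) / (2 * b)) * b + (a + 1) / (2 * b) * ((a + 1) / (2 * b)) * 0)
      with (-1) in Q by (field; exact Bn). lra.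
  - specialize (Q (b / c)).
    replace (a - 2 * (b / c) * b + b / c * (b / c) * c) with ((a * c - b * b) / c) in Q
      by (field; exact Cn).
    assert (0 < c) by lra.
    apply Rmult_le_compat_r with (r := c) in Q; [| lra].
    replace ((a * c - b * b) / c * c) with (a * c - b * b) in Q by (field; exact Cn). lra.
Qed.

Lemma cauchy_schwarz x y : Rabs (hinner x y) <= hnorm x * hnorm y.
Proof.
  assert (Sq : hinner x y * hinner x y <= hinner x x * hinner y y).
  { apply quadratic_discriminant; try apply hinner_ge0.
    intros s. pose proof (hinner_ge0 _ (hsub x (hscal s y))) as K.
    inner_simpl_in K. rewrite (hinnerC _ y x) in K. nra. }
  unfold hnorm. rewrite <- sqrt_mult by apply hinner_ge0.
  rewrite <- sqrt_Rsqr_abs. apply sqrt_le_1_alt. exact Sq.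
Qed.

Lemma inner_le x y : hinner x y <= hnorm x * hnorm y.
Proof. pose proof (cauchy_schwarz x y); pose proof (Rle_abs (hinner x y)); lra. Qed.

Lemma inner_ge x y : - (hnorm x * hnorm y) <= hinner x y.
Proof.
  pose proof (cauchy_schwarz x y); pose proof (Rle_abs (- hinner x y)) as A.
  rewrite Rabs_Ropp in A; lra.
Qed.

Lemma hnorm_triangle x y : hnorm (hadd x y) <= hnorm x + hnorm y.
Proof.
  apply hnorm_le_sq; [pose proof (hnorm_ge0 x); pose proof (hnorm_ge0 y); lra |].
  inner_simpl. pose proof (inner_le x y). rewrite (hinnerC _ y x), <- !hnorm_sq. nra.
Qed.

Lemma hnorm_scal a x : hnorm (hscal a x) = Rabs a * hnorm x.
Proof.
  unfold hnorm. rewrite hinnerZ, inner_scalr, <- Rmult_assoc, sqrt_mult.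
  - rewrite <- sqrt_Rsqr_abs. reflexivity.
  - apply Rle_0_sqr.
  - apply hinner_ge0.
Qed.

Lemma hnorm_opp x : hnorm (hopp x) = hnorm x.
Proof. unfold hnorm. inner_simpl. f_equal; ring. Qed.

Lemma hnorm_sub_self x : hnorm (hsub x x) = 0.
Proof. unfold hnorm. inner_simpl. replace (_ - _ - _) with 0 by ring. apply sqrt_0. Qed.

Lemma hnorm_sub_sym x y : hnorm (hsub x y) = hnorm (hsub y x).
Proof.
  replace (hsub x y) with (hopp (hsub y x)) by (apply vec_ext; intro; inner_simpl; ring).
  apply hnorm_opp.
Qed.

Lemma hnorm_le_sub x y : hnorm x <= hnorm (hsub x y) + hnorm y.
Proof.
  replace x with (hadd (hsub x y) y) at 1 by (apply vec_ext; intro; inner_simpl; ring).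
  apply hnorm_triangle.
Qed.

End Norm.

Lemma exists_infimum {X : Type} (phi : X -> R) (x0 : X) : (forall x, 0 <= phi x) ->
  exists d, 0 <= d /\ (forall x, d <= phi x) /\
            (forall eps, 0 < eps -> exists x, phi x < d + eps).
Proof.
  intros Hpos.
  set (E := fun r => exists x, r = - phi x).
  assert (Eb : bound E) by (exists 0; intros r [x ->]; pose proof (Hpos x); lra).
  destruct (completeness E Eb (ex_intro _ (- phi x0) (ex_intro _ x0 eq_refl))) as [m [Hub Hlub]].
  exists (- m). split; [| split].
  - enough (m <= 0) by lra. apply Hlub. intros r [x ->]. pose proof (Hpos x). lra.
  - intros x. enough (- phi x <= m) by lra. apply Hub. exists x. reflexivity.
  - intros eps He. apply NNPP. intros Hn.
    enough (m <= m - eps) by lra. apply Hlub. intros r [x ->].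
    apply Rnot_gt_le. intros Hx. apply Hn. exists x. lra.
Qed.

Section Projection.
Context {H : HilbertSpace}.

(* Parallelogram law, in the form used to show that minimizing sequences are
   Cauchy: if x, y are almost of minimal norm d and so is their midpoint,
   they are close to each other. *)
Lemma minimizing_pair_close (x y : H) d a b : 0 <= d ->
  hnorm x <= d + a -> hnorm y <= d + b -> d <= hnorm (hscal (1/2) (hadd x y)) ->
  hinner (hsub x y) (hsub x y) <= 2 * ((d + a) * (d + a)) + 2 * ((d + b) * (d + b)) - 4 * (d * d).
Proof.
  intros Hd Hx Hy Hm.
  assert (Sx : hinner x x <= (d + a) * (d + a))
    by (rewrite <- hnorm_sq; pose proof (hnorm_ge0 x); nra).
  assert (Sy : hinner y y <= (d + b) * (d + b))
    by (rewrite <- hnorm_sq; pose proof (hnorm_ge0 y); nra).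
  assert (Sm : d * d <= hinner (hscal (1/2) (hadd x y)) (hscal (1/2) (hadd x y)))
    by (rewrite <- hnorm_sq; nra).
  inner_simpl_in Sm. inner_simpl. rewrite (hinnerC _ y x) in *. lra.
Qed.

Lemma orth_of_min_norm (l v : H) :
  (forall s, hnorm l <= hnorm (hsub l (hscal s v))) -> hinner l v = 0.
Proof.
  intros Hmin. set (c := hinner l v). set (n := hinner v v).
  assert (Q : forall s, 0 <= - 2 * s * c + s * s * n).
  { intros s. pose proof (Hmin s) as M.
    assert (S : hinner l l <= hinner (hsub l (hscal s v)) (hsub l (hscal s v)))
      by (rewrite <- !hnorm_sq; pose proof (hnorm_ge0 l); nra).
    inner_simpl_in S. rewrite (hinnerC _ v l) in S. unfold c, n. nra. }
  assert (0 <= n) by apply hinner_ge0.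
  specialize (Q (c / (n + 1))).
  replace (- 2 * (c / (n + 1)) * c + c / (n + 1) * (c / (n + 1)) * n)
    with (- (c * c) * (n + 2) / ((n + 1) * (n + 1))) in Q by (field; lra).
  assert (P : 0 < (n + 1) * (n + 1)) by nra.
  apply Rmult_le_compat_r with (r := (n + 1) * (n + 1)) in Q; [| lra].
  replace (- (c * c) * (n + 2) / ((n + 1) * (n + 1)) * ((n + 1) * (n + 1)))
    with (- (c * c) * (n + 2)) in Q by (field; lra).
  nra.
Qed.

Lemma inv_succ_small eps : 0 < eps ->
  exists N, forall n, (N <= n)%nat -> 0 < / (INR n + 1) < eps.
Proof.
  intros He. destruct (archimed_cor1 eps He) as [N [HN HN0]]. exists N.
  intros n Hn. apply le_INR in Hn. pose proof (pos_INR N). pose proof (lt_0_INR N HN0).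
  split; [apply Rinv_0_lt_compat; lra |].
  apply Rle_lt_trans with (/ INR N); [apply Rinv_le_contravar; lra | exact HN].
Qed.

Lemma minimizing_sequence_converges (e : nat -> H) d : 0 <= d ->
  (forall n, hnorm (e n) < d + / (INR n + 1)) ->
  (forall n k, d <= hnorm (hscal (1/2) (hadd (e n) (e k)))) ->
  exists l, forall eps, 0 < eps -> exists N, forall n, (N <= n)%nat ->
    hnorm (hsub (e n) l) < eps.
Proof.
  intros Hd0 He Hmid. apply (hcomplete H e).
  intros eps Heps.
  set (r := Rmin 1 (eps * eps / (8 * d + 4))).
  assert (Hr : 0 < r) by (apply Rmin_pos; [lra | apply Rdiv_lt_0_compat; nra]).
  assert (Hr1 : r <= 1) by apply Rmin_l.
  assert (Hreps : (8 * d + 4) * r <= eps * eps).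
  { apply Rle_trans with ((8 * d + 4) * (eps * eps / (8 * d + 4)));
      [apply Rmult_le_compat_l; [lra | apply Rmin_r] | right; field; lra]. }
  destruct (inv_succ_small r Hr) as [N HN].
  exists N. intros n k Hn Hk. apply (hnorm_lt_sq (hsub (e n) (e k))); [lra |].
  pose proof (HN n Hn). pose proof (HN k Hk).
  eapply Rle_lt_trans; [apply (minimizing_pair_close _ _ d (/ (INR n + 1)) (/ (INR k + 1)));
                        [exact Hd0 | apply Rlt_le, He | apply Rlt_le, He | apply Hmid] |].
  nra.
Qed.

Variable T : H -> H.
Hypothesis T_add : forall x y, T (hadd x y) = hadd (T x) (T y).
Hypothesis T_scal : forall a x, T (hscal a x) = hscal a (T x).
Variable w0 : H.

Let dist z := hnorm (hsub w0 (T z)).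

(* Projection theorem for the affine set w0 - range T: its closure contains
   a vector l of minimal norm, which in particular cannot be shortened along
   any direction T z. *)
Lemma min_norm_in_closure : exists l,
  (forall eps, 0 < eps -> exists z, hnorm (hsub (hsub w0 (T z)) l) < eps) /\
  (forall z s, hnorm l <= hnorm (hsub l (hscal s (T z)))).
Proof.
  destruct (exists_infimum dist hzero (fun z => hnorm_ge0 _)) as [d [Hd0 [Hlow Happ]]].
  assert (Hseq : forall n : nat, {z | dist z < d + / (INR n + 1)}).
  { intros n. apply constructive_indefinite_description, Happ.
    apply Rinv_0_lt_compat. pose proof (pos_INR n). lra. }
  set (zs n := proj1_sig (Hseq n)). set (e n := hsub w0 (T (zs n))).
  assert (He : forall n, hnorm (e n) < d + / (INR n + 1)) by (intros n; exact (proj2_sig (Hseq n))).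
  destruct (minimizing_sequence_converges e d Hd0 He) as [l Hl].
  { intros n k.
    replace (hscal (1/2) (hadd (e n) (e k))) with (hsub w0 (T (hscal (1/2) (hadd (zs n) (zs k)))))
      by (unfold e; rewrite T_scal, T_add; apply vec_ext; intro; inner_simpl; field).
    apply Hlow. }
  exists l. split.
  - intros eps Heps. destruct (Hl eps Heps) as [N HN]. exists (zs N). exact (HN N (le_n N)).
  - intros z s. apply Rle_trans with d.
    + apply Rle_plus_epsilon. intros eps Heps.
      destruct (inv_succ_small (eps / 2) ltac:(lra)) as [N1 HN1].
      destruct (Hl (eps / 2) ltac:(lra)) as [N HN].
      set (n := max N N1). specialize (HN n (Nat.le_max_l _ _)).
      pose proof (He n). pose proof (HN1 n (Nat.le_max_r N N1)).
      pose proof (hnorm_le_sub l (e n)). rewrite hnorm_sub_sym in HN. lra.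
    + apply Rle_plus_epsilon. intros eps Heps.
      destruct (Hl eps Heps) as [N HN]. specialize (HN N (le_n N)).
      pose proof (Hlow (hadd (zs N) (hscal s z))) as Hm. unfold dist in Hm.
      replace (hsub w0 (T (hadd (zs N) (hscal s z))))
        with (hadd (hsub (e N) l) (hsub l (hscal s (T z)))) in Hm
        by (rewrite T_add, T_scal; unfold e; apply vec_ext; intro; inner_simpl; ring).
      pose proof (hnorm_triangle (hsub (e N) l) (hsub l (hscal s (T z)))). lra.
Qed.

Hypothesis T_selfadjoint : forall x y, hinner (T x) y = hinner x (T y).
Hypothesis w0_orth_kernel : forall e, T e = hzero -> hinner w0 e = 0.

Lemma orth_kernel_in_range_closure :
  forall eta, 0 < eta -> exists z, hnorm (hsub w0 (T z)) < eta.
Proof.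
  destruct min_norm_in_closure as [l [Hclose Hmin]].
  assert (l_orth_range : forall z, hinner l (T z) = 0).
  { intros z. apply orth_of_min_norm. intros s. apply Hmin. }
  assert (l_kernel : T l = hzero)
    by (apply hinner_eq0; rewrite T_selfadjoint; apply l_orth_range).
  assert (l_orth_w0 : hinner l w0 = 0) by (rewrite hinnerC; apply w0_orth_kernel, l_kernel).
  assert (l_zero : hnorm l = 0).
  { apply Rle_antisym; [| apply hnorm_ge0].
    apply Rle_plus_epsilon. intros eps Heps. destruct (Hclose eps Heps) as [z Hz].
    rewrite hnorm_sub_sym in Hz.
    assert (Id : hinner l l = hinner l (hsub l (hsub w0 (T z))))
      by (inner_simpl; rewrite l_orth_w0, l_orth_range; ring).
    pose proof (inner_le l (hsub l (hsub w0 (T z)))). rewrite <- hnorm_sq in Id.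
    pose proof (hnorm_ge0 l). pose proof (hnorm_ge0 (hsub l (hsub w0 (T z)))). nra. }
  intros eta Heta. destruct (Hclose eta Heta) as [z Hz]. exists z.
  pose proof (hnorm_le_sub (hsub w0 (T z)) l). lra.
Qed.

End Projection.

Section Curves.
Context {H : HilbertSpace}.

Definition vderiv (a : R -> H) (x : R) (v : H) : Prop :=
  forall eps, 0 < eps -> exists d, 0 < d /\ forall h, h <> 0 -> Rabs h < d ->
    hnorm (hsub (hscal (/ h) (hsub (a (x + h)) (a x))) v) <= eps.

Definition vcont (a : R -> H) (x : R) : Prop :=
  forall eps, 0 < eps -> exists d, 0 < d /\ forall s, Rabs (s - x) < d ->
    hnorm (hsub (a s) (a x)) <= eps.

Lemma increment_bound h (D v : H) : h <> 0 ->
  hnorm (hsub (hscal (/ h) D) v) <= 1 -> hnorm D <= Rabs h * (hnorm v + 1).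
Proof.
  intros Hh Q. replace D with (hscal h (hscal (/ h) D)) at 1
    by (rewrite hscalA, Rinv_r, hscal1 by exact Hh; reflexivity).
  rewrite hnorm_scal. apply Rmult_le_compat_l; [apply Rabs_pos |].
  pose proof (hnorm_le_sub (hscal (/ h) D) v). lra.
Qed.

Lemma small_times_bound r K eps : 0 < K -> Rabs r < eps / K -> Rabs r * K <= eps.
Proof.
  intros HK Hr. apply Rmult_lt_compat_r with (r := K) in Hr; [| exact HK].
  replace (eps / K * K) with eps in Hr by (field; lra). lra.
Qed.

Lemma vderiv_vcont a x v : vderiv a x v -> vcont a x.
Proof.
  intros D eps He. destruct (D 1 Rlt_0_1) as [d1 [Hd1 Q]].
  pose proof (hnorm_ge0 v).
  exists (Rmin d1 (eps / (hnorm v + 1))).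
  split; [apply Rmin_pos; [exact Hd1 | apply Rdiv_lt_0_compat; lra] |].
  intros s Hs. pose proof (Rmin_l d1 (eps / (hnorm v + 1))).
  pose proof (Rmin_r d1 (eps / (hnorm v + 1))).
  destruct (Req_dec s x) as [-> | Hn]; [rewrite hnorm_sub_self; lra |].
  specialize (Q (s - x) ltac:(lra) ltac:(lra)). replace (x + (s - x)) with s in Q by ring.
  eapply Rle_trans; [apply (increment_bound (s - x) _ v); [lra | exact Q] |].
  apply small_times_bound; lra.
Qed.

Lemma vcont_const (c : H) x : vcont (fun _ => c) x.
Proof. intros eps He. exists 1. split; [lra |]. intros. rewrite hnorm_sub_self; lra. Qed.

Lemma vderiv_const (c : H) x : vderiv (fun _ => c) x hzero.
Proof.
  intros eps He. exists 1. split; [lra |]. intros h _ _.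
  replace (hsub (hscal (/ h) (hsub c c)) hzero) with (hsub c c)
    by (apply vec_ext; intro; inner_simpl; ring).
  rewrite hnorm_sub_self; lra.
Qed.

Lemma vcont_affine a al be x :
  vcont a (al * x + be) -> vcont (fun s => a (al * s + be)) x.
Proof.
  intros C eps He. destruct (C eps He) as [d [Hd Q]].
  pose proof (Rabs_pos al).
  exists (d / (Rabs al + 1)). split; [apply Rdiv_lt_0_compat; lra |].
  intros s Hs. apply Q.
  replace (al * s + be - (al * x + be)) with (al * (s - x)) by ring.
  rewrite Rabs_mult.
  apply Rle_lt_trans with ((Rabs al + 1) * Rabs (s - x)).
  - apply Rmult_le_compat_r; [apply Rabs_pos | lra].
  - rewrite Rmult_comm. apply Rmult_lt_compat_r with (r := Rabs al + 1) in Hs; [| lra].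
    replace (d / (Rabs al + 1) * (Rabs al + 1)) with d in Hs by (field; lra). exact Hs.
Qed.

Lemma vderiv_affine a al be x v : al <> 0 ->
  vderiv a (al * x + be) v -> vderiv (fun s => a (al * s + be)) x (hscal al v).
Proof.
  intros Hal D eps He.
  assert (Ha : 0 < Rabs al) by (apply Rabs_pos_lt; exact Hal).
  destruct (D (eps / Rabs al) ltac:(apply Rdiv_lt_0_compat; lra)) as [d [Hd Q]].
  exists (d / Rabs al). split; [apply Rdiv_lt_0_compat; lra |].
  intros h Hh Hhd.
  assert (Habs : Rabs (al * h) < d).
  { rewrite Rabs_mult, Rmult_comm. apply Rmult_lt_compat_r with (r := Rabs al) in Hhd; [| exact Ha].
    replace (d / Rabs al * Rabs al) with d in Hhd by (field; lra). exact Hhd. }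
  specialize (Q (al * h) ltac:(apply Rmult_integral_contrapositive; tauto) Habs).
  replace (al * (x + h) + be) with (al * x + be + al * h) by ring.
  replace (hsub (hscal (/ h) (hsub (a (al * x + be + al * h)) (a (al * x + be)))) (hscal al v))
    with (hscal al (hsub (hscal (/ (al * h)) (hsub (a (al * x + be + al * h))
                                                    (a (al * x + be)))) v))
    by (apply vec_ext; intro z; inner_simpl; field; tauto).
  rewrite hnorm_scal.
  apply Rmult_le_compat_l with (r := Rabs al) in Q; [| lra].
  replace (Rabs al * (eps / Rabs al)) with eps in Q by (field; lra). exact Q.
Qed.

Lemma inner_continuity (a b : R -> H) x :
  vcont a x -> vcont b x -> continuity_pt (fun s => hinner (a s) (b s)) x.
Proof.
  intros Ca Cb eps He.
  set (K := hnorm (a x) + hnorm (b x) + 1).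
  pose proof (hnorm_ge0 (a x)). pose proof (hnorm_ge0 (b x)).
  assert (HK : 0 < K) by (unfold K; lra).
  set (e1 := Rmin 1 (eps / (3 * K))).
  assert (He1 : 0 < e1) by (apply Rmin_pos; [lra | apply Rdiv_lt_0_compat; lra]).
  assert (E1a : e1 <= 1) by apply Rmin_l.
  assert (E1b : e1 * K <= eps / 3).
  { apply Rle_trans with (eps / (3 * K) * K); [apply Rmult_le_compat_r; [lra | apply Rmin_r] |].
    right; field; lra. }
  destruct (Ca e1 He1) as [da [Hda Qa]]. destruct (Cb e1 He1) as [db [Hdb Qb]].
  exists (Rmin da db). split; [apply Rmin_pos; assumption |].
  intros s [_ Hs]. simpl in Hs; unfold R_dist in Hs.
  specialize (Qa s ltac:(pose proof (Rmin_l da db); lra)).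
  specialize (Qb s ltac:(pose proof (Rmin_r da db); lra)).
  simpl; unfold R_dist.
  replace (hinner (a s) (b s) - hinner (a x) (b x)) with
    (hinner (hsub (a s) (a x)) (b s) + hinner (a x) (hsub (b s) (b x)))
    by (inner_simpl; ring).
  eapply Rle_lt_trans; [apply Rabs_triang |].
  pose proof (cauchy_schwarz (hsub (a s) (a x)) (b s)).
  pose proof (cauchy_schwarz (a x) (hsub (b s) (b x))).
  pose proof (hnorm_le_sub (b s) (b x)).
  pose proof (hnorm_ge0 (hsub (a s) (a x))).
  assert (hnorm (hsub (a s) (a x)) * hnorm (b s) <= e1 * K)
    by (apply Rmult_le_compat; try apply hnorm_ge0; unfold K; lra).
  assert (hnorm (a x) * hnorm (hsub (b s) (b x)) <= K * e1)
    by (apply Rmult_le_compat; try apply hnorm_ge0; unfold K; lra).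
  lra.
Qed.

Lemma inner_derivative (a b : R -> H) x va vb :
  vderiv a x va -> vderiv b x vb ->
  derivable_pt_lim (fun s => hinner (a s) (b s)) x (hinner va (b x) + hinner (a x) vb).
Proof.
  intros Da Db eps He.
  assert (Cb := vderiv_vcont _ _ _ Db).
  set (K := hnorm va + hnorm (a x) + hnorm (b x) + 1).
  pose proof (hnorm_ge0 va). pose proof (hnorm_ge0 (a x)). pose proof (hnorm_ge0 (b x)).
  assert (HK : 0 < K) by (unfold K; lra).
  set (e1 := Rmin 1 (eps / (4 * K))).
  assert (He1 : 0 < e1) by (apply Rmin_pos; [lra | apply Rdiv_lt_0_compat; lra]).
  assert (E1a : e1 <= 1) by apply Rmin_l.
  assert (E1b : e1 * K <= eps / 4).
  { apply Rle_trans with (eps / (4 * K) * K); [apply Rmult_le_compat_r; [lra | apply Rmin_r] |].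
    right; field; lra. }
  destruct (Da e1 He1) as [da [Hda Qa]]. destruct (Db e1 He1) as [db [Hdb Qb]].
  destruct (Cb e1 He1) as [dc [Hdc Qc]].
  assert (Hd : 0 < Rmin da (Rmin db dc)) by (repeat apply Rmin_pos; assumption).
  exists (mkposreal _ Hd). intros h Hh Hhd. simpl in Hhd.
  pose proof (Rmin_l da (Rmin db dc)). pose proof (Rmin_r da (Rmin db dc)).
  pose proof (Rmin_l db dc). pose proof (Rmin_r db dc).
  specialize (Qa h Hh ltac:(lra)). specialize (Qb h Hh ltac:(lra)).
  specialize (Qc (x + h) ltac:(replace (x + h - x) with h by ring; lra)).
  set (qa := hsub (hscal (/ h) (hsub (a (x + h)) (a x))) va) in *.
  set (qb := hsub (hscal (/ h) (hsub (b (x + h)) (b x))) vb) in *.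
  replace ((hinner (a (x + h)) (b (x + h)) - hinner (a x) (b x)) / h -
           (hinner va (b x) + hinner (a x) vb))
    with (hinner qa (b (x + h)) + hinner va (hsub (b (x + h)) (b x)) + hinner (a x) qb)
    by (unfold qa, qb; inner_simpl; field; exact Hh).
  eapply Rle_lt_trans; [apply Rabs_triang |].
  eapply Rle_lt_trans; [apply Rplus_le_compat_r, Rabs_triang |].
  pose proof (cauchy_schwarz qa (b (x + h))).
  pose proof (cauchy_schwarz va (hsub (b (x + h)) (b x))).
  pose proof (cauchy_schwarz (a x) qb).
  pose proof (hnorm_le_sub (b (x + h)) (b x)).
  pose proof (hnorm_ge0 qa). pose proof (hnorm_ge0 qb).
  pose proof (hnorm_ge0 (hsub (b (x + h)) (b x))).
  assert (hnorm qa * hnorm (b (x + h)) <= e1 * K)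
    by (apply Rmult_le_compat; try apply hnorm_ge0; unfold K; lra).
  assert (hnorm va * hnorm (hsub (b (x + h)) (b x)) <= K * e1)
    by (apply Rmult_le_compat; unfold K; lra).
  assert (hnorm (a x) * hnorm qb <= K * e1) by (apply Rmult_le_compat; unfold K; lra).
  lra.
Qed.

End Curves.

Lemma nondecreasing_of_deriv (f l : R -> R) (a b : R) : a <= b ->
  (forall c, a <= c <= b -> continuity_pt f c) ->
  (forall c, a < c < b -> derivable_pt_lim f c (l c)) ->
  (forall c, a < c < b -> 0 <= l c) -> f a <= f b.
Proof.
  intros Hab Cf Df Pl. destruct (Req_dec a b) as [-> | Hn]; [lra |].
  set (pr := fun c (P : a < c < b) => exist (fun l0 => derivable_pt_lim f c l0) (l c) (Df c P)).
  destruct (MVT f id a b pr (fun c _ => derivable_pt_id c) ltac:(lra) Cf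
     (fun c _ => derivable_continuous_pt _ _ (derivable_pt_id c))) as [c [P E]].
  unfold pr in E; simpl in E.
  rewrite (derive_pt_eq_0 id c 1 (derivable_pt_id c) (derivable_pt_lim_id c)) in E.
  unfold id in E. pose proof (Pl c P). nra.
Qed.

(* Pointwise forms of Stdlib's differentiation rules, so that [apply] can
   unify them with goals written as lambda terms. *)
Lemma deriv_plus f1 f2 x l1 l2 : derivable_pt_lim f1 x l1 -> derivable_pt_lim f2 x l2 ->
  derivable_pt_lim (fun s => f1 s + f2 s) x (l1 + l2).
Proof. intros D1 D2; exact (derivable_pt_lim_plus _ _ _ _ _ D1 D2). Qed.

Lemma deriv_mult f1 f2 x l1 l2 : derivable_pt_lim f1 x l1 -> derivable_pt_lim f2 x l2 ->
  derivable_pt_lim (fun s => f1 s * f2 s) x (l1 * f2 x + f1 x * l2).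
Proof. intros D1 D2; exact (derivable_pt_lim_mult _ _ _ _ _ D1 D2). Qed.

Lemma deriv_opp f x l : derivable_pt_lim f x l -> derivable_pt_lim (fun s => - f s) x (- l).
Proof. intros D; exact (derivable_pt_lim_opp _ _ _ D). Qed.

Lemma deriv_linear k x : derivable_pt_lim (fun s => k * s) x k.
Proof.
  pose proof (derivable_pt_lim_scal id k x 1 (derivable_pt_lim_id x)) as D.
  rewrite Rmult_1_r in D. exact D.
Qed.

Lemma deriv_exp_linear k x : derivable_pt_lim (fun s => exp (k * s)) x (exp (k * x) * k).
Proof.
  exact (derivable_pt_lim_comp (fun s => k * s) exp x k (exp (k * x))
           (deriv_linear k x) (derivable_pt_lim_exp _)).
Qed.

Lemma cont_plus f1 f2 x : continuity_pt f1 x -> continuity_pt f2 x ->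
  continuity_pt (fun s => f1 s + f2 s) x.
Proof. intros C1 C2; exact (continuity_pt_plus _ _ _ C1 C2). Qed.

Lemma cont_mult f1 f2 x : continuity_pt f1 x -> continuity_pt f2 x ->
  continuity_pt (fun s => f1 s * f2 s) x.
Proof. intros C1 C2; exact (continuity_pt_mult _ _ _ C1 C2). Qed.

Lemma cont_opp f x : continuity_pt f x -> continuity_pt (fun s => - f s) x.
Proof. intros C; exact (continuity_pt_opp _ _ C). Qed.

Lemma cont_linear k x : continuity_pt (fun s => k * s) x.
Proof. exact (derivable_continuous_pt _ _ (exist _ k (deriv_linear k x))). Qed.

Lemma cont_exp_linear k x : continuity_pt (fun s => exp (k * s)) x.
Proof. exact (derivable_continuous_pt _ _ (exist _ _ (deriv_exp_linear k x))). Qed.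

Section HalfLine.
Context {H : HilbertSpace}.

Definition extend0 (w : R -> H) (s : R) : H := w (Rmax 0 s).

Variables (w v : R -> H).
Hypothesis w_deriv : forall t, 0 <= t -> has_deriv_on_nonneg w t (v t).

Lemma extend0_eq s : 0 <= s -> extend0 w s = w s.
Proof. intros Hs; unfold extend0; rewrite Rmax_right; [reflexivity | exact Hs]. Qed.

Lemma extend0_vderiv t : 0 < t -> vderiv (extend0 w) t (v t).
Proof.
  intros Ht eps He. destruct (w_deriv t ltac:(lra) eps He) as [d [Hd Q]].
  exists (Rmin d t). split; [apply Rmin_pos; lra |].
  intros h Hh Hhd. pose proof (Rmin_l d t); pose proof (Rmin_r d t).
  pose proof (Rle_abs (- h)) as Hab. rewrite Rabs_Ropp in Hab.
  rewrite !extend0_eq by lra. apply Q; [exact Hh | lra | lra].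
Qed.

Lemma extend0_vcont s : vcont (extend0 w) s.
Proof.
  destruct (Rle_or_lt 0 s) as [Hs | Hs].
  - intros eps He. destruct (w_deriv s Hs 1 Rlt_0_1) as [d1 [Hd1 Q]].
    pose proof (hnorm_ge0 (v s)).
    exists (Rmin d1 (eps / (hnorm (v s) + 1))).
    split; [apply Rmin_pos; [exact Hd1 | apply Rdiv_lt_0_compat; lra] |].
    intros s' Hs'. rewrite (extend0_eq s Hs). unfold extend0.
    set (s'' := Rmax 0 s').
    assert (Hclose : Rabs (s'' - s) <= Rabs (s' - s)).
    { unfold s'', Rmax. destruct (Rle_dec 0 s'); [lra |].
      rewrite !Rabs_left1 by lra. lra. }
    assert (Hs0 : 0 <= s'') by apply Rmax_l.
    pose proof (Rmin_l d1 (eps / (hnorm (v s) + 1))).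
    pose proof (Rmin_r d1 (eps / (hnorm (v s) + 1))).
    destruct (Req_dec s'' s) as [-> | Hn]; [rewrite hnorm_sub_self; lra |].
    specialize (Q (s'' - s) ltac:(lra) ltac:(lra) ltac:(lra)).
    replace (s + (s'' - s)) with s'' in Q by ring.
    eapply Rle_trans; [apply (increment_bound (s'' - s) _ (v s)); [lra | exact Q] |].
    apply small_times_bound; lra.
  - intros eps He. exists (- s). split; [lra |]. intros s' Hs'.
    assert (s' < 0) by (pose proof (Rle_abs (s' - s)); lra).
    unfold extend0. rewrite !Rmax_left by lra. rewrite hnorm_sub_self; lra.
Qed.

End HalfLine.

(* Radius of the ball, around the origin, in which the perturbed flow stays
   up to time 1/G, in terms of its initial value. *)
Definition flow_radius {H : HilbertSpace} (x : H) : R := sqrt (3 * (1 + hinner x x)).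

Lemma flow_radius_pos {H : HilbertSpace} (x : H) : 0 < flow_radius x.
Proof. apply sqrt_lt_R0. pose proof (hinner_ge0 _ x). lra. Qed.

(* The flow w' = -T w + g on [0, +oo), for T selfadjoint and nonnegative and
   a perturbation |g| <= G.  W extends w to the left of 0, so that the real
   calculus of Stdlib applies on the whole line. *)
Section PerturbedFlow.
Context {H : HilbertSpace}.
Variables (T : H -> H) (g : H) (G : R) (w : R -> H).
Hypothesis T_selfadjoint : forall x y, hinner (T x) y = hinner x (T y).
Hypothesis T_nonneg : forall x, 0 <= hinner (T x) x.
Hypothesis g_small : hnorm g <= G.
Hypothesis w_flow : forall t, 0 <= t -> has_deriv_on_nonneg w t (hadd (hopp (T (w t))) g).

Let v t := hadd (hopp (T (w t))) g.
Let W := extend0 w.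
Let B := flow_radius (w 0).

Lemma W_vderiv t : 0 < t -> vderiv W t (v t).
Proof. exact (extend0_vderiv w v w_flow t). Qed.

Lemma W_vcont s : vcont W s.
Proof. exact (extend0_vcont w v w_flow s). Qed.

Lemma G_nonneg : 0 <= G.
Proof. pose proof (hnorm_ge0 g); lra. Qed.

Lemma g_inner_bound x : hinner g x <= G * hnorm x.
Proof.
  eapply Rle_trans; [apply inner_le |].
  apply Rmult_le_compat_r; [apply hnorm_ge0 | exact g_small].
Qed.

Lemma sq_norm_derivative t : 0 < t ->
  derivable_pt_lim (fun s => hinner (W s) (W s)) t
    (2 * (hinner g (w t) - hinner (T (w t)) (w t))).
Proof.
  intros Ht. pose proof (inner_derivative W W t _ _ (W_vderiv t Ht) (W_vderiv t Ht)) as D.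
  unfold W in D. rewrite extend0_eq in D by lra. unfold v in D. inner_simpl_in D.
  replace (2 * (hinner g (w t) - hinner (T (w t)) (w t))) with
    (- hinner (T (w t)) (w t) + hinner g (w t) + (- hinner (w t) (T (w t)) + hinner (w t) g))
    by (rewrite (hinnerC _ (w t) g), <- T_selfadjoint; ring).
  exact D.
Qed.

Lemma sq_norm_continuity t : continuity_pt (fun s => hinner (W s) (W s)) t.
Proof. apply inner_continuity; apply W_vcont. Qed.

(* Gronwall: (1 + |w|^2) e^{-Gs} is nonincreasing, so the energy at most
   triples up to time 1/G. *)
Lemma energy_growth s : 0 <= s -> G * s <= 1 ->
  hinner (w s) (w s) <= 3 * (1 + hinner (w 0) (w 0)).
Proof.
  intros Hs HGs. pose proof G_nonneg as HG.
  set (psi := fun a => - ((1 + hinner (W a) (W a)) * exp (- G * a))).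
  assert (M : psi 0 <= psi s).
  { apply (nondecreasing_of_deriv psi (fun a =>
      - ((0 + 2 * (hinner g (w a) - hinner (T (w a)) (w a))) * exp (- G * a)
         + (1 + hinner (W a) (W a)) * (exp (- G * a) * - G)))); [exact Hs | | |].
    - intros c _. apply (cont_opp (fun a => (1 + hinner (W a) (W a)) * exp (- G * a))).
      apply cont_mult; [apply cont_plus; [apply continuity_pt_const; intros ?? ; reflexivity
                                         | apply sq_norm_continuity] | apply cont_exp_linear].
    - intros c Hc. apply (deriv_opp (fun a => (1 + hinner (W a) (W a)) * exp (- G * a))).
      apply (deriv_mult (fun a => 1 + hinner (W a) (W a)) (fun a => exp (- G * a))).
      + apply deriv_plus; [apply derivable_pt_lim_const | apply sq_norm_derivative; lra].
      + apply deriv_exp_linear.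
    - intros c Hc. unfold W. rewrite extend0_eq by lra.
      pose proof (T_nonneg (w c)). pose proof (g_inner_bound (w c)).
      pose proof (exp_pos (- G * c)). pose proof (hnorm_sq (w c)). pose proof (hnorm_ge0 (w c)).
      assert (2 * hnorm (w c) <= 1 + hinner (w c) (w c))
        by (pose proof (Rle_0_sqr (hnorm (w c) - 1)); unfold Rsqr in *; nra).
      assert (2 * (hinner g (w c) - hinner (T (w c)) (w c)) <= G * (1 + hinner (w c) (w c)))
        by nra.
      nra. }
  unfold psi, W in M. rewrite !extend0_eq in M by lra. rewrite Rmult_0_r, exp_0 in M.
  assert (E : exp (- G * s) * exp (G * s) = 1)
    by (rewrite <- exp_plus; replace (- G * s + G * s) with 0 by ring; apply exp_0).
  assert (exp (G * s) <= 3).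
  { eapply Rle_trans; [| apply exp_le_3].
    destruct (Req_dec (G * s) 1) as [-> | ]; [lra | left; apply exp_increasing; lra]. }
  pose proof (exp_pos (G * s)). pose proof (hinner_ge0 _ (w 0)). pose proof (hinner_ge0 _ (w s)).
  assert (Hgr : 1 + hinner (w s) (w s) <= (1 + hinner (w 0) (w 0)) * exp (G * s)).
  { replace (1 + hinner (w s) (w s))
      with ((1 + hinner (w s) (w s)) * exp (- G * s) * exp (G * s)) by (rewrite Rmult_assoc, E; ring).
    apply Rmult_le_compat_r; lra. }
  nra.
Qed.

Lemma norm_bound s : 0 <= s -> G * s <= 1 -> hnorm (w s) <= B.
Proof.
  intros Hs HGs. apply hnorm_le_sq; [left; apply flow_radius_pos |].
  unfold B, flow_radius. rewrite sqrt_sqrt; [apply energy_growth; assumption |].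
  pose proof (hinner_ge0 _ (w 0)). lra.
Qed.

(* Since T is selfadjoint, a |-> (w(c - a), w(c + a)) only varies through
   the perturbation g; at a = c this compares |w(c)|^2 with (w(0), w(2c)). *)
Lemma semigroup_estimate c : 0 < c -> 2 * G * c <= 1 ->
  hinner (w c) (w c) <= hinner (w 0) (w (2 * c)) + 2 * G * B * c.
Proof.
  intros Hc HGc. pose proof G_nonneg. pose proof (flow_radius_pos (w 0)) as HB; fold B in HB.
  set (F := fun a => hinner (W (-1 * a + c)) (W (1 * a + c)) + (2 * G * B) * a).
  assert (M : F 0 <= F c).
  { apply (nondecreasing_of_deriv F (fun a => hinner (hscal (-1) (v (-1 * a + c))) (W (1 * a + c))
       + hinner (W (-1 * a + c)) (hscal 1 (v (1 * a + c))) + 2 * G * B)); [lra | | |].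
    - intros a _. apply cont_plus; [| apply cont_linear].
      apply inner_continuity; apply vcont_affine; apply W_vcont.
    - intros a Ha. apply deriv_plus; [| apply deriv_linear].
      apply (inner_derivative (fun a => W (-1 * a + c)) (fun a => W (1 * a + c)));
        apply vderiv_affine; try lra; apply W_vderiv; lra.
    - intros a Ha. unfold W, v. rewrite !extend0_eq by lra. inner_simpl.
      rewrite T_selfadjoint.
      pose proof (inner_le g (w (1 * a + c))). pose proof (inner_ge (w (-1 * a + c)) g).
      assert (hnorm (w (1 * a + c)) <= B) by (apply norm_bound; nra).
      assert (hnorm (w (-1 * a + c)) <= B) by (apply norm_bound; nra).
      assert (hnorm g * hnorm (w (1 * a + c)) <= G * B)
        by (apply Rmult_le_compat; try apply hnorm_ge0; assumption).
      assert (hnorm (w (-1 * a + c)) * hnorm g <= B * G)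
        by (apply Rmult_le_compat; try apply hnorm_ge0; assumption).
      nra. }
  unfold F, W in M.
  replace (-1 * 0 + c) with c in M by ring. replace (1 * 0 + c) with c in M by ring.
  replace (-1 * c + c) with 0 in M by ring. replace (1 * c + c) with (2 * c) in M by ring.
  rewrite !extend0_eq in M by lra. lra.
Qed.

Lemma sq_norm_almost_decreasing s t : 0 <= s <= t -> G * t <= 1 ->
  hinner (w t) (w t) <= hinner (w s) (w s) + 2 * G * B * (t - s).
Proof.
  intros Hst HGt. pose proof G_nonneg. pose proof (flow_radius_pos (w 0)) as HB; fold B in HB.
  set (F := fun a => (2 * G * B) * a + - hinner (W a) (W a)).
  assert (M : F s <= F t).
  { apply (nondecreasing_of_deriv F
      (fun a => 2 * G * B + - (2 * (hinner g (w a) - hinner (T (w a)) (w a))))); [lra | | |].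
    - intros a _. apply cont_plus; [apply cont_linear | apply cont_opp, sq_norm_continuity].
    - intros a Ha. apply deriv_plus; [apply deriv_linear | apply deriv_opp, sq_norm_derivative; lra].
    - intros a Ha. pose proof (T_nonneg (w a)). pose proof (g_inner_bound (w a)).
      assert (hnorm (w a) <= B) by (apply norm_bound; nra).
      assert (G * hnorm (w a) <= G * B) by (apply Rmult_le_compat_l; assumption). nra. }
  unfold F, W in M. rewrite !extend0_eq in M by lra. lra.
Qed.

Lemma range_test_lower_bound a t z : 0 < a < t -> 2 * G * t <= 1 ->
  hinner (w t) (w t) - 2 * G * B * t - hnorm (hsub (w 0) (T z)) * B <= hinner (T z) (w (2 * a)).
Proof.
  intros Ha HGt. pose proof G_nonneg. pose proof (flow_radius_pos (w 0)) as HB; fold B in HB.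
  set (r := hsub (w 0) (T z)).
  assert (Er : hinner r (w (2 * a)) = hinner (w 0) (w (2 * a)) - hinner (T z) (w (2 * a)))
    by (unfold r; inner_simpl; ring).
  pose proof (inner_le r (w (2 * a))).
  assert (hnorm (w (2 * a)) <= B) by (apply norm_bound; nra).
  assert (hnorm r * hnorm (w (2 * a)) <= hnorm r * B)
    by (apply Rmult_le_compat_l; [apply hnorm_ge0 | assumption]).
  pose proof (semigroup_estimate a ltac:(lra) ltac:(nra)).
  pose proof (sq_norm_almost_decreasing a t ltac:(lra) ltac:(nra)).
  nra.
Qed.

(* Main a priori estimate: testing the flow against T z, for an arbitrary z,
   bounds |w(t)|^2 by terms that are small when t is large, G t is small and
   w(0) is close to T z. *)
Lemma error_bound t z : 0 < t -> 2 * G * t <= 1 ->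
  hinner (w t) (w t) <=
    hnorm z * B / t + 2 * G * B * t + hnorm (hsub (w 0) (T z)) * B + hnorm z * G.
Proof.
  intros Ht HGt. pose proof G_nonneg. pose proof (flow_radius_pos (w 0)) as HB; fold B in HB.
  set (r := hsub (w 0) (T z)).
  set (K := hinner (w t) (w t) - 2 * G * B * t - hnorm r * B - hnorm z * G).
  set (F := fun s => (-1/2) * hinner z (W (2 * s + 0)) + (- K) * s).
  assert (M : F 0 <= F t).
  { apply (nondecreasing_of_deriv F (fun s => 0 * hinner z (W (2 * s + 0)) + (-1/2) *
        (hinner hzero (W (2 * s + 0)) + hinner z (hscal 2 (v (2 * s + 0)))) + - K)); [lra | | |].
    - intros a _. apply cont_plus; [| apply cont_linear].
      apply (cont_mult (fun _ => -1/2) (fun s => hinner z (W (2 * s + 0))));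
        [apply continuity_pt_const; intros ?? ; reflexivity |].
      apply (inner_continuity (fun _ => z) (fun s => W (2 * s + 0)));
        [apply vcont_const | apply vcont_affine, W_vcont].
    - intros a Ha. apply deriv_plus; [| apply deriv_linear].
      apply (deriv_mult (fun _ => -1/2) (fun s => hinner z (W (2 * s + 0))));
        [apply derivable_pt_lim_const |].
      apply (inner_derivative (fun _ => z) (fun s => W (2 * s + 0)));
        [apply vderiv_const | apply vderiv_affine; [lra | apply W_vderiv; lra]].
    - intros a Ha. replace (2 * a + 0) with (2 * a) by ring.
      unfold W, v. rewrite !extend0_eq by lra. inner_simpl. rewrite <- T_selfadjoint.
      pose proof (range_test_lower_bound a t z Ha HGt). pose proof (inner_le z g).
      assert (hnorm z * hnorm g <= hnorm z * G)
        by (apply Rmult_le_compat_l; [apply hnorm_ge0 | assumption]).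
      unfold K, r. lra. }
  unfold F, W in M. replace (2 * 0 + 0) with 0 in M by ring.
  replace (2 * t + 0) with (2 * t) in M by ring. rewrite !extend0_eq in M by lra.
  pose proof (inner_le z (w 0)). pose proof (inner_ge z (w (2 * t))).
  assert (hnorm (w 0) <= B) by (apply norm_bound; lra).
  assert (hnorm (w (2 * t)) <= B) by (apply norm_bound; nra).
  pose proof (hnorm_ge0 z).
  assert (hnorm z * hnorm (w 0) <= hnorm z * B) by (apply Rmult_le_compat_l; assumption).
  assert (hnorm z * hnorm (w (2 * t)) <= hnorm z * B) by (apply Rmult_le_compat_l; assumption).
  assert (Kt : K * t <= hnorm z * B) by (unfold K in M |- *; nra).
  assert (hnorm z * B / t * t = hnorm z * B) by (field; lra).
  unfold K in Kt. fold r. nra.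
Qed.

End PerturbedFlow.

Lemma lim0_plus (f g : R -> R) :
  lim0_to_0 f -> lim0_to_0 g -> lim0_to_0 (fun delta => f delta + g delta).
Proof.
  intros Hf Hg eps He.
  destruct (Hf (eps / 2) ltac:(lra)) as [d1 [Hd1 Q1]].
  destruct (Hg (eps / 2) ltac:(lra)) as [d2 [Hd2 Q2]].
  exists (Rmin d1 d2). split; [apply Rmin_pos; assumption |].
  intros delta Hdelta. pose proof (Rmin_l d1 d2). pose proof (Rmin_r d1 d2).
  specialize (Q1 delta ltac:(lra)). specialize (Q2 delta ltac:(lra)).
  pose proof (Rabs_triang (f delta) (g delta)). lra.
Qed.

Lemma lim0_scal (c : R) (f : R -> R) : lim0_to_0 f -> lim0_to_0 (fun delta => c * f delta).
Proof.
  intros Hf eps He. pose proof (Rabs_pos c).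
  destruct (Hf (eps / (Rabs c + 1)) ltac:(apply Rdiv_lt_0_compat; lra)) as [d [Hd Q]].
  exists d. split; [exact Hd |]. intros delta Hdelta. specialize (Q delta Hdelta).
  rewrite Rabs_mult. pose proof (Rabs_pos (f delta)).
  apply Rmult_lt_compat_l with (r := Rabs c + 1) in Q; [| lra].
  replace ((Rabs c + 1) * (eps / (Rabs c + 1))) with eps in Q by (field; lra). nra.
Qed.

Lemma lim0_id : lim0_to_0 (fun delta => delta).
Proof.
  intros eps He. exists eps. split; [exact He |].
  intros delta Hdelta. rewrite Rabs_right by lra. lra.
Qed.

Lemma lim0_inv_of_infty (t : R -> R) : (forall delta, 0 < delta -> 0 < t delta) ->
  lim0_to_infty t -> lim0_to_0 (fun delta => / t delta).
Proof.
  intros Hpos Ht eps He. destruct (Ht (/ eps)) as [d [Hd Q]].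
  exists d. split; [exact Hd |]. intros delta Hdelta.
  specialize (Q delta Hdelta). pose proof (Hpos delta (proj1 Hdelta)).
  rewrite Rabs_right by (apply Rle_ge, Rlt_le, Rinv_0_lt_compat; lra).
  rewrite <- (Rinv_inv eps). apply Rinv_lt_contravar; [| exact Q].
  apply Rmult_lt_0_compat; [apply Rinv_0_lt_compat |]; lra.
Qed.

Lemma lim0_of_approx (e : R -> R) : (forall delta, 0 <= e delta) ->
  (forall eps, 0 < eps -> exists b d, lim0_to_0 b /\ 0 < d /\
     forall delta, 0 < delta < d -> e delta <= b delta + eps) ->
  lim0_to_0 e.
Proof.
  intros Hpos Happ eps He.
  destruct (Happ (eps / 2) ltac:(lra)) as [b [d1 [Hb [Hd1 Q1]]]].
  destruct (Hb (eps / 2) ltac:(lra)) as [d2 [Hd2 Q2]].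
  exists (Rmin d1 d2). split; [apply Rmin_pos; assumption |].
  intros delta Hdelta. pose proof (Rmin_l d1 d2). pose proof (Rmin_r d1 d2).
  specialize (Q1 delta ltac:(lra)). specialize (Q2 delta ltac:(lra)).
  pose proof (Hpos delta). pose proof (Rle_abs (b delta)).
  rewrite Rabs_right by lra. lra.
Qed.

Lemma lim0_norm_of_sq {H : HilbertSpace} (x : R -> H) :
  lim0_to_0 (fun delta => hinner (x delta) (x delta)) -> lim0_to_0 (fun delta => hnorm (x delta)).
Proof.
  intros Hx eps He. destruct (Hx (eps * eps) ltac:(nra)) as [d [Hd Q]].
  exists d. split; [exact Hd |]. intros delta Hdelta. specialize (Q delta Hdelta).
  rewrite Rabs_right by (apply Rle_ge, hnorm_ge0).
  apply hnorm_lt_sq; [lra |]. pose proof (Rle_abs (hinner (x delta) (x delta))). lra.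
Qed.

Lemma lim0_rpower (p : R) : 0 < p -> lim0_to_0 (fun delta => Rpower delta p).
Proof.
  intros Hp eps He. exists (Rpower eps (/ p)). split; [apply exp_pos |].
  intros delta [Hd0 Hd]. unfold Rpower in *. rewrite Rabs_right by (apply Rle_ge, Rlt_le, exp_pos).
  apply ln_increasing in Hd; [| exact Hd0]. rewrite ln_exp in Hd.
  rewrite <- (exp_ln eps He). apply exp_increasing.
  apply Rmult_lt_compat_l with (r := p) in Hd; [| exact Hp].
  replace (p * (/ p * ln eps)) with (ln eps) in Hd by (field; lra). lra.
Qed.

Lemma power_schedule_pos C gamma delta : 0 < C -> 0 < C * Rpower delta (- gamma).
Proof. intros HC. pose proof (exp_pos (- gamma * ln delta)). unfold Rpower. nra. Qed.

Lemma power_schedule_infty C gamma : 0 < C -> 0 < gamma ->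
  lim0_to_infty (fun delta => C * Rpower delta (- gamma)).
Proof.
  intros HC Hg M. destruct (lim0_rpower gamma Hg (C / (Rabs M + 1)) ltac:(
    apply Rdiv_lt_0_compat; pose proof (Rabs_pos M); lra)) as [d [Hd Q]].
  exists d. split; [exact Hd |]. intros delta Hdelta. specialize (Q delta Hdelta).
  pose proof (exp_pos (gamma * ln delta)) as Hpos. pose proof (Rle_abs M). pose proof (Rabs_pos M).
  unfold Rpower in *. rewrite Rabs_right in Q by lra.
  replace (- gamma * ln delta) with (- (gamma * ln delta)) by ring. rewrite exp_Ropp.
  apply Rmult_lt_compat_r with (r := (Rabs M + 1) / exp (gamma * ln delta)) in Q;
    [| apply Rdiv_lt_0_compat; lra].
  replace (exp (gamma * ln delta) * ((Rabs M + 1) / exp (gamma * ln delta))) with (Rabs M + 1)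
    in Q by (field; lra).
  replace (C / (Rabs M + 1) * ((Rabs M + 1) / exp (gamma * ln delta)))
    with (C * / exp (gamma * ln delta)) in Q by (field; lra).
  lra.
Qed.

Lemma power_schedule_null C gamma : gamma < 1 ->
  lim0_to_0 (fun delta => C * Rpower delta (- gamma) * delta).
Proof.
  intros Hg eps He. destruct (lim0_scal C _ (lim0_rpower (1 - gamma) ltac:(lra)) eps He)
    as [d [Hd Q]].
  exists d. split; [exact Hd |]. intros delta Hdelta.
  replace (C * Rpower delta (- gamma) * delta) with (C * Rpower delta (1 - gamma)).
  - exact (Q delta Hdelta).
  - rewrite <- (Rpower_1 delta) at 3 by lra.
    rewrite Rmult_assoc, <- Rpower_plus. f_equal. f_equal. ring.
Qed.

Lemma linear_sub {H : HilbertSpace} (L : H -> H) :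
  (forall x y, L (hadd x y) = hadd (L x) (L y)) -> (forall a x, L (hscal a x) = hscal a (L x)) ->
  forall x y, L (hsub x y) = hsub (L x) (L y).
Proof.
  intros Hadd Hscal x y. unfold hsub.
  replace (hopp y) with (hscal (-1) y) by (apply vec_ext; intro; inner_simpl; ring).
  replace (hopp (L y)) with (hscal (-1) (L y)) by (apply vec_ext; intro; inner_simpl; ring).
  rewrite Hadd, Hscal. reflexivity.
Qed.

Lemma bounded_linear_bound {H : HilbertSpace} (L : H -> H) : bounded_linear L ->
  exists M, 0 <= M /\ forall x, hnorm (L x) <= M * hnorm x.
Proof.
  intros [_ [_ [M0 HM0]]]. exists (Rmax M0 0). split; [apply Rmax_r |].
  intros x. eapply Rle_trans; [apply HM0 |].
  apply Rmult_le_compat_r; [apply hnorm_ge0 | apply Rmax_l].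
Qed.

Section Regularization.
Context {H : HilbertSpace}.
Variables (A P : H -> H) (f y u0 : H) (fd : R -> H) (u : R -> R -> H) (M : R).
Hypothesis A_add : forall x z, A (hadd x z) = hadd (A x) (A z).
Hypothesis A_scal : forall a x, A (hscal a x) = hscal a (A x).
Hypothesis P_add : forall x z, P (hadd x z) = hadd (P x) (P z).
Hypothesis P_scal : forall a x, P (hscal a x) = hscal a (P x).
Hypothesis P_bound : forall x, hnorm (P x) <= M * hnorm x.
Hypothesis M_nonneg : 0 <= M.
Hypothesis y_solution : A y = f.
Hypothesis T_selfadjoint : selfadjoint (fun x => P (A x)).
Hypothesis T_nonneg : nonneg_op (fun x => P (A x)).
Hypothesis T_kernel : forall z, nullsp (fun x => P (A x)) z <-> nullsp A z.
Hypothesis u0_orth : orth (hsub u0 y) (nullsp A).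
Hypothesis fd_close : forall delta, 0 < delta -> hnorm (hsub (fd delta) f) <= delta.
Hypothesis u_solves : forall delta, 0 < delta -> solves_ode P A (fd delta) u0 (u delta).

Let T x := P (A x).
Let w0 := hsub u0 y.

Lemma T_additive x z : T (hadd x z) = hadd (T x) (T z).
Proof. unfold T; rewrite A_add, P_add; reflexivity. Qed.

Lemma T_homogeneous a x : T (hscal a x) = hscal a (T x).
Proof. unfold T; rewrite A_scal, P_scal; reflexivity. Qed.

Lemma error_flow delta : 0 < delta -> forall s, 0 <= s ->
  has_deriv_on_nonneg (fun s => hsub (u delta s) y) s
    (hadd (hopp (T (hsub (u delta s) y))) (P (hsub (fd delta) f))).
Proof.
  intros Hdelta s Hs eps He. destruct (proj2 (u_solves delta Hdelta) s Hs eps He) as [d [Hd Q]].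
  exists d. split; [exact Hd |]. intros h Hh Hhd Hsh.
  replace (hadd (hopp (T (hsub (u delta s) y))) (P (hsub (fd delta) f)))
    with (hopp (P (hsub (A (u delta s)) (fd delta)))).
  - replace (hsub (hsub (u delta (s + h)) y) (hsub (u delta s) y))
      with (hsub (u delta (s + h)) (u delta s)) by (apply vec_ext; intro; inner_simpl; ring).
    apply Q; assumption.
  - unfold T. rewrite !(linear_sub A A_add A_scal), !(linear_sub P P_add P_scal), y_solution.
    apply vec_ext; intro; inner_simpl; ring.
Qed.

Lemma regularized_error_bound delta t z : 0 < delta -> 0 < t -> 2 * (M * delta) * t <= 1 ->
  hinner (hsub (u delta t) y) (hsub (u delta t) y) <=
    hnorm z * flow_radius w0 / t + 2 * (M * delta) * flow_radius w0 * t
    + hnorm (hsub w0 (T z)) * flow_radius w0 + hnorm z * (M * delta).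
Proof.
  intros Hdelta Ht HGt.
  assert (Hg : hnorm (P (hsub (fd delta) f)) <= M * delta).
  { eapply Rle_trans; [apply P_bound |]. apply Rmult_le_compat_l; [exact M_nonneg |].
    apply fd_close, Hdelta. }
  pose proof (error_bound T _ _ (fun s => hsub (u delta s) y) T_selfadjoint T_nonneg Hg
                (error_flow delta Hdelta) t z Ht HGt) as E.
  cbv beta in E. rewrite (proj1 (u_solves delta Hdelta)) in E. exact E.
Qed.

Lemma regularization_converges (td : R -> R) :
  (forall delta, 0 < delta -> 0 < td delta) -> lim0_to_infty td ->
  lim0_to_0 (fun delta => td delta * delta) ->
  lim0_to_0 (fun delta => hnorm (hsub (u delta (td delta)) y)).
Proof.
  intros Htd_pos Htd_infty Htd_delta.
  set (B := flow_radius w0). pose proof (flow_radius_pos w0) as HB. fold B in HB.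
  apply lim0_norm_of_sq, lim0_of_approx; [intros; apply hinner_ge0 |].
  intros eps He.
  destruct (orth_kernel_in_range_closure T T_additive T_homogeneous w0 T_selfadjoint
              (fun e Te => u0_orth e (proj1 (T_kernel e) Te))
              (eps / B) ltac:(apply Rdiv_lt_0_compat; lra)) as [z Hz].
  exists (fun delta => hnorm z * B * / td delta + 2 * M * B * (td delta * delta)
                       + hnorm z * M * delta).
  destruct (Htd_delta (/ (2 * M + 1)) ltac:(apply Rinv_0_lt_compat; lra)) as [d [Hd Qd]].
  exists d. split; [| split; [exact Hd |]].
  - repeat apply lim0_plus; apply lim0_scal;
      [apply lim0_inv_of_infty | exact Htd_delta | apply lim0_id]; assumption.
  - intros delta Hdelta. specialize (Qd delta Hdelta).
    pose proof (Htd_pos delta (proj1 Hdelta)) as Ht.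
    assert (Hsmall : 2 * (M * delta) * td delta <= 1).
    { rewrite Rabs_right in Qd by nra.
      apply Rmult_lt_compat_l with (r := 2 * M + 1) in Qd; [| lra].
      rewrite Rinv_r in Qd by lra. nra. }
    pose proof (regularized_error_bound delta (td delta) z (proj1 Hdelta) Ht Hsmall) as E.
    fold B in E.
    assert (hnorm (hsub w0 (T z)) * B < eps)
      by (apply Rmult_lt_compat_r with (r := B) in Hz; [| exact HB];
          replace (eps / B * B) with eps in Hz by (field; lra); exact Hz).
    unfold Rdiv in E. nra.
Qed.

End Regularization.

Theorem theorem2 (H : HilbertSpace) (A P : H -> H) (f y u0 : H)
    (fd : R -> H) (u : R -> R -> H) :
  bounded_linear A ->
  A y = f -> orth y (nullsp A) ->
  bounded_linear P ->
  selfadjoint (fun x => P (A x)) ->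
  nonneg_op (fun x => P (A x)) ->
  (forall z, nullsp (fun x => P (A x)) z <-> nullsp A z) ->
  orth (hsub u0 y) (nullsp A) ->
  (forall delta, 0 < delta -> hnorm (hsub (fd delta) f) <= delta) ->
  (forall delta, 0 < delta -> solves_ode P A (fd delta) u0 (u delta)) ->
  (forall td : R -> R,
     (forall delta, 0 < delta -> 0 < td delta) ->
     lim0_to_infty td ->
     lim0_to_0 (fun delta => td delta * delta) ->
     lim0_to_0 (fun delta => hnorm (hsub (u delta (td delta)) y)))
  /\
  (forall C gamma, 0 < C -> 0 < gamma < 1 ->
     lim0_to_0 (fun delta =>
       hnorm (hsub (u delta (C * Rpower delta (- gamma))) y))).
Proof.
  intros HA Hy _ HP HTs HTn HN Horth Hfd Hsol.
  destruct (bounded_linear_bound P HP) as [M [HM0 HM]].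
  destruct HA as [A_add [A_scal _]]. destruct HP as [P_add [P_scal _]].
  pose proof (regularization_converges A P f y u0 fd u M A_add A_scal P_add P_scal HM HM0
                Hy HTs HTn HN Horth Hfd Hsol) as converges.
  split; [exact converges |].
  intros C gamma HC Hg. apply converges.
  - intros delta _. apply power_schedule_pos, HC.
  - apply power_schedule_infty; [exact HC | apply Hg].
  - apply power_schedule_null, Hg.
Qed.
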